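(* Let $\vec{p}\in\Delta^n$ and let $\mathcal{D}=\mathrm{Mul}_k(\vec{p})$. Then $\mathcal{D}$ is $(k,\infty)$-explicitly bounded with variance proxy $8/k$; that is, for every even $s$ with $2\le s\le k$, $$\{v_i^2=1\ \forall i\in[n]\}\ \vdash_{s}\ \mathbb{E}_{Y\sim\mathcal{D}}\big[\langle Y-\vec{p},v\rangle^s\big]\le (8s/k)^{s/2},$$ where this is regarded as a polynomial inequality in the formal variables $v_1,\dots,v_n$.
   Context: $\Delta^n\subset\mathbb{R}^n$ is the simplex of nonnegative vectors with coordinates summing to 1. For $\vec{p}\in\Delta^n$, $\mathrm{Mul}_k(\vec{p})$ is the distribution of the frequency vector $Y\in\Delta^n$, $Y_j=\frac1k\#\{\nu\le k: Z_\nu=j\}$, where $Z_1,\dots,Z_k$ are i.i.d. draws from $\vec{p}$; its mean is $\vec{p}$. For polynomials in formal variables $v$, the notation $\{q_1=0,\dots,q_m=0\}\vdash_d f\ge 0$ (a degree-$d$ sum-of-squares proof) means there exist polynomials $s_1,\dots,s_m$ and a sum-of-squares polynomial $r$ such that $f=\sum_i s_iq_i + r$ with $\deg(s_iq_i)\le d$ for all $i$ and $\deg r\le d$. A distribution $\mathcal{D}$ on $\mathbb{R}^n$ with mean $\mu$ is $(t,\infty)$-explicitly bounded with variance proxy $\sigma$ if for every even $2\le s\le t$, $\{v_i^2=1\ \forall i\in[n]\}\vdash_s \mathbb{E}_{Y\sim\mathcal{D}}[\langle Y-\mu,v\rangle^s]\le(\sigma s)^{s/2}$. *)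

From HB Require Import structures.
From mathcomp Require Import all_boot all_order all_algebra.
From mathcomp Require Import reals.
From mathcomp Require Import mpoly.
Set Implicit Arguments. Unset Strict Implicit. Unset Printing Implicit Defensive.
Import Order.TTheory GRing.Theory Num.Theory.
Local Open Scope ring_scope.

Definition in_simplex (R : realType) (n : nat) (p : 'I_n -> R) : Prop :=
  (forall i, 0 <= p i) /\ \sum_(i < n) p i = 1.

Definition freq (R : realType) (n k : nat) (z : {ffun 'I_k -> 'I_n}) (j : 'I_n) : R :=
  (#|[set nu | z nu == j]|)%:R / k%:R.

(* E_{Y ~ Mul_k(p)} [ <Y - p, v>^s ] as a polynomial in formal variables v:
   expectation over k i.i.d. draws Z_1..Z_k from p *)
Definition mul_moment (R : realType) (n k : nat) (p : 'I_n -> R) (s : nat)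
  : {mpoly R[n]} :=
  \sum_(z : {ffun 'I_k -> 'I_n})
     (\prod_(nu < k) p (z nu)) *: (\sum_(j < n) (freq R z j - p j) *: 'X_j) ^+ s.

(* {q_1 = 0, ..., q_m = 0} |-_d f >= 0 : f = sum_i s_i q_i + r with
   deg (s_i q_i) <= d, r a sum of squares of degree <= d.
   (msize P = total degree of P + 1, and 0 for P = 0.) *)
Definition sos_proves (R : realType) (n m d : nat) (q : 'I_m -> {mpoly R[n]})
  (f : {mpoly R[n]}) : Prop :=
  exists (s : 'I_m -> {mpoly R[n]}) (gs : seq {mpoly R[n]}),
    [/\ f = \sum_(i < m) s i * q i + \sum_(g <- gs) g ^+ 2,
        (forall i, (msize (s i * q i) <= d.+1)%N)
      & (msize (\sum_(g <- gs) g ^+ 2) <= d.+1)%N].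

Definition cube_axioms (R : realType) (n : nat) : 'I_n -> {mpoly R[n]} :=
  fun i => 'X_i ^+ 2 - 1.

From HB Require Import structures.
From mathcomp Require Import all_boot all_order all_algebra.
From mathcomp Require Import reals.
From mathcomp Require Import mpoly.
From mathcomp Require Import ring zify.
Set Implicit Arguments. Unset Strict Implicit. Unset Printing Implicit Defensive.
Import Order.TTheory GRing.Theory Num.Theory.

(* Write <Y - p, v> = S / k with S = sum_nu (v_(Z_nu) - <p, v>), a sum of k
   independent centred linear forms.  By induction on k, E[S^(2r)] <= (16 m k)^r
   for all r <= m, each inequality certified by a degree-2r sum of squares
   modulo v_i^2 = 1.  In the inductive step the new summand
   v_a - <p, v> = sum_b p_b (v_a - v_b) is symmetrised by Jensen's inequality
   for even powers, which has an explicit SOS proof; the odd moments of the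
   symmetric variable v_a - v_b vanish and its even moments are at most 4^l on
   the cube; the binomial coefficients are then absorbed by
   C(2r, 2l) 4^l <= C(r, l) (16 m)^l.  For r = m = s/2 this gives
   E[<Y - p, v>^s] <= (16 m k)^m / k^(2m) = (8 s / k)^(s/2). *)

(* Compare the ratios of consecutive terms: (2r-2l)(2r-2l-1)/((2l+1)(2l+2))
   on the left against 4r (r-l)/(l+1) on the right. *)
Lemma bin_double_le r l : (l <= r)%N -> ('C(r.*2, l.*2) <= 'C(r, l) * (4 * r) ^ l)%N.
Proof.
elim: l => [|l IHl] lt_lr; first by rewrite !bin0 expn0.
have {}IHl := IHl (ltnW lt_lr).
rewrite -(@leq_pmul2r (l.*2.+1 * l.*2.+2)) //.
have -> : ('C(r.*2, (l.+1).*2) * (l.*2.+1 * l.*2.+2)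
          = (r.*2 - l.*2.+1) * (r.*2 - l.*2) * 'C(r.*2, l.*2))%N.
  have := mul_bin_left r.*2 l.*2; have := mul_bin_left r.*2 l.*2.+1.
  rewrite doubleS => binS_odd binS_even.
  by rewrite mulnCA [_ * l.*2.+2]mulnC binS_odd mulnCA binS_even; ring.
have -> : ('C(r, l.+1) * (4 * r) ^ l.+1 * (l.*2.+1 * l.*2.+2)
          = (4 * r * l.*2.+1) * (r.*2 - l.*2) * ('C(r, l) * (4 * r) ^ l))%N.
  have -> : (r.*2 - l.*2 = 2 * (r - l))%N by lia.
  have -> : (l.*2.+2 = 2 * l.+1)%N by lia.
  rewrite [RHS](_ : _ = 4 * r * l.*2.+1 * 2 * ((r - l) * 'C(r, l)) * (4 * r) ^ l)%N; last by ring.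
  by rewrite -mul_bin_left expnS; ring.
by rewrite leq_mul // leq_mul //; lia.
Qed.

Lemma sum_bin_even_le m k r : (r <= m)%N ->
  (\sum_(l < r.+1) 'C(r.*2, l.*2) * 4 ^ l * (16 * m * k) ^ (r - l)
    <= (16 * m * k.+1) ^ r)%N.
Proof.
move=> le_rm; rewrite mulnSr expnDn; apply: leq_sum => -[l /=]; rewrite ltnS => le_lr _.
have le_16 : ((4 * r) ^ l * 4 ^ l <= (16 * m) ^ l)%N.
  have [->|l_gt0] := posnP l; first by rewrite !expn0.
  by rewrite -expnMn leq_exp2r //; lia.
rewrite (mulnC (_ ^ (r - l))) mulnA leq_mul //.
apply: (leq_trans (leq_mul (bin_double_le le_lr) (leqnn _))).
by rewrite -mulnA leq_mul.
Qed.

Local Open Scope ring_scope.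

Lemma sum_ord_even (V : nmodType) (g : nat -> V) r :
  (forall i, odd i -> g i = 0) ->
  \sum_(i < r.*2.+1) g i = \sum_(l < r.+1) g l.*2.
Proof.
move=> g_odd; elim: r => [|r IHr]; first by rewrite !big_ord_recr !big_ord0.
rewrite doubleS big_ord_recr big_ord_recr /= IHr [in RHS]big_ord_recr /=.
by rewrite (g_odd r.*2.+1) ?addr0 //= odd_double.
Qed.

Section EvenPowerTangent.
Variable T : comPzRingType.
Implicit Types a c : T.

(* (c^(2M+2) - a^(2M+2) - (2M+2) a^(2M+1) (c - a)) / (c - a)^2
   = sum_(i + j = 2M) (j + 1) a^j c^i, written as a nonnegative combination of
   squares. *)
Definition tangent_quot a c M : T :=
  M.+1%:R * (a ^+ M) ^+ 2 +
  \sum_(t < M) t.+1%:R * ((a + c) * a ^+ t * c ^+ (M.-1 - t)) ^+ 2.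

Lemma tangent_quotS a c M :
  tangent_quot a c M.+1 = c ^+ 2 * tangent_quot a c M +
    (a ^+ M) ^+ 2 * ((M.*2 + 3)%:R * a ^+ 2 + (M.*2 + 2)%:R * (a * c)).
Proof.
rewrite /tangent_quot big_ord_recr /= subnn expr0 mulr1 mulrDr mulr_sumr.
have -> : \sum_(t < M) t.+1%:R * ((a + c) * a ^+ t * c ^+ (M - t)) ^+ 2 =
          \sum_(t < M) c ^+ 2 * (t.+1%:R * ((a + c) * a ^+ t * c ^+ (M.-1 - t)) ^+ 2).
  apply: eq_bigr => -[t /= lt_tM] _.
  have -> : (M - t = (M.-1 - t).+1)%N by lia.
  by rewrite (exprS c); ring.
rewrite (exprS a) -[M.+2]addn2 -[M.+1]addn1 !natrD -!muln2 !natrM; ring.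
Qed.

Lemma even_pow_tangent_gap a c M :
  c ^+ M.*2.+2 - a ^+ M.*2.+2 - M.*2.+2%:R * (a ^+ M.*2.+1 * (c - a))
  = (c - a) ^+ 2 * tangent_quot a c M.
Proof.
elim: M => [|M IHM].
  by rewrite /tangent_quot big_ord0 double0 addr0; ring.
rewrite tangent_quotS [RHS]mulrDr (mulrCA _ (c ^+ 2)) -IHM.
have pow_double (x : T) j : x ^+ (j + M.*2) = x ^+ j * (x ^+ M) ^+ 2.
  by rewrite exprD -exprM muln2.
rewrite -[(M.+1).*2.+2]/(4 + M.*2)%N -[(M.+1).*2.+1]/(3 + M.*2)%N.
rewrite -[M.*2.+2]/(2 + M.*2)%N -[M.*2.+1]/(1 + M.*2)%N !pow_double.
rewrite !natrD -!muln2 !natrM.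
ring.
Qed.
End EvenPowerTangent.

Section TotalDegree.
Variables (R : realType) (n : nat).
Local Notation P := {mpoly R[n]}.

Definition deg_le (d : nat) (f : P) := (msize f <= d.+1)%N.

Lemma deg_le_mono d d' f : (d <= d')%N -> deg_le d f -> deg_le d' f.
Proof. by rewrite /deg_le => le_dd' /leq_trans; apply. Qed.

Lemma deg_le0 d : deg_le d 0.
Proof. by rewrite /deg_le msize0. Qed.

Lemma deg_le1 d : deg_le d 1.
Proof. by rewrite /deg_le msize1. Qed.

Lemma deg_leX i : deg_le 1 'X_i.
Proof. by rewrite /deg_le msizeX mdeg1. Qed.

Lemma deg_leD d f g : deg_le d f -> deg_le d g -> deg_le d (f + g).
Proof. by rewrite /deg_le => df dg; apply: leq_trans (msizeD_le _ _) _; rewrite geq_max df dg. Qed.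

Lemma deg_leN d f : deg_le d f -> deg_le d (- f).
Proof. by rewrite /deg_le msizeN. Qed.

Lemma deg_leB d f g : deg_le d f -> deg_le d g -> deg_le d (f - g).
Proof. by move=> df dg; apply: deg_leD => //; apply: deg_leN. Qed.

Lemma deg_leZ d c f : deg_le d f -> deg_le d (c *: f).
Proof. exact/leq_trans/msizeZ_le. Qed.

Lemma deg_leMn d f k : deg_le d f -> deg_le d (f *+ k).
Proof. by move=> df; elim: k => [|k IHk]; rewrite ?mulr0n ?deg_le0 // mulrS deg_leD. Qed.

Lemma deg_le_sum d (I : Type) (r : seq I) (Q : pred I) (F : I -> P) :
  (forall i, Q i -> deg_le d (F i)) -> deg_le d (\sum_(i <- r | Q i) F i).
Proof.
move=> dF; elim/big_rec: _ => [|i x Qi dx]; first exact: deg_le0.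
by apply: deg_leD => //; apply: dF.
Qed.

Lemma deg_leM a b f g : deg_le a f -> deg_le b g -> deg_le (a + b) (f * g).
Proof.
rewrite /deg_le => df dg.
have [->|f_neq0] := eqVneq f 0; first by rewrite mul0r msize0.
have [->|g_neq0] := eqVneq g 0; first by rewrite mulr0 msize0.
have f_pos : (0 < msize f)%N by rewrite lt0n msize_poly_eq0.
have g_pos : (0 < msize g)%N by rewrite lt0n msize_poly_eq0.
rewrite msizeM // -subn1; move: (msize f) (msize g) df dg f_pos g_pos => x y; lia.
Qed.

Lemma deg_leXn a f k : deg_le a f -> deg_le (a * k) (f ^+ k).
Proof.
by move=> df; elim: k => [|k IHk]; rewrite ?expr0 ?deg_le1 // exprS mulnS deg_leM.
Qed.

End TotalDegree.

Section SosCertificates.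
Variables (R : realType) (n m : nat) (q : 'I_m -> {mpoly R[n]}).
Local Notation P := {mpoly R[n]}.
Local Notation sos d := (sos_proves d q).

Lemma sos0 d : sos d 0.
Proof.
exists (fun=> 0), [::]; split.
- by rewrite big_nil addr0 big1 // => i _; rewrite mul0r.
- by move=> i; rewrite mul0r; apply: deg_le0.
- by rewrite big_nil; apply: deg_le0.
Qed.

Lemma sosD d f g : sos d f -> sos d g -> sos d (f + g).
Proof.
move=> [s1 [gs1 [-> dq1 dg1]]] [s2 [gs2 [-> dq2 dg2]]].
exists (fun i => s1 i + s2 i), (gs1 ++ gs2); split.
- rewrite big_cat addrACA -big_split; congr (_ + _).
  by apply: eq_bigr => i _; rewrite mulrDl.
- by move=> i; rewrite mulrDl; apply: deg_leD; [apply: dq1|apply: dq2].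
- by rewrite big_cat; apply: deg_leD; [apply: dg1|apply: dg2].
Qed.

Lemma sos_sum d (I : Type) (r : seq I) (Q : pred I) (F : I -> P) :
  (forall i, Q i -> sos d (F i)) -> sos d (\sum_(i <- r | Q i) F i).
Proof.
move=> sF; elim/big_rec: _ => [|i x Qi sx]; first exact: sos0.
by apply: sosD => //; apply: sF.
Qed.

Lemma sosMn d f k : sos d f -> sos d (f *+ k).
Proof.
move=> sf; elim: k => [|k IHk]; first by rewrite mulr0n; apply: sos0.
by rewrite mulrS; apply: sosD.
Qed.

Lemma sosZ d c f : 0 <= c -> sos d f -> sos d (c *: f).
Proof.
move=> c_ge0 [s1 [gs1 [-> dq1 dg1]]].
exists (fun i => c *: s1 i), (map (fun g => Num.sqrt c *: g) gs1); split.
- rewrite scalerDr scaler_sumr big_map scaler_sumr; congr (_ + _).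
    by apply: eq_bigr => i _; rewrite scalerAl.
  by apply: eq_bigr => g _; rewrite exprZn sqr_sqrtr.
- by move=> i; rewrite -scalerAl; apply/deg_leZ/dq1.
- rewrite big_map (eq_bigr (fun g => c *: g ^+ 2)) => [|g _]; last first.
    by rewrite exprZn sqr_sqrtr.
  by rewrite -scaler_sumr; apply/deg_leZ/dg1.
Qed.

Lemma sos_sqr d g : deg_le d (g ^+ 2) -> sos d (g ^+ 2).
Proof.
move=> dg; exists (fun=> 0), [:: g]; split.
- by rewrite big_seq1 big1 ?add0r // => i _; rewrite mul0r.
- by move=> i; rewrite mul0r; apply: deg_le0.
- by rewrite big_seq1.
Qed.

Lemma sos_const d c : 0 <= c -> sos d (c *: 1).
Proof.
move=> c_ge0; apply: sosZ => //; rewrite -(expr1n _ 2).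
by apply: sos_sqr; rewrite expr1n deg_le1.
Qed.

Lemma sos_axiom_mul d h i : deg_le d (h * q i) -> sos d (h * q i).
Proof.
move=> dhq; exists (fun j => if j == i then h else 0), [::]; split.
- rewrite big_nil addr0 (bigD1 i) //= eqxx big1 ?addr0 // => j /negbTE ->.
  by rewrite mul0r.
- by move=> j; case: eqP => [->|_] //; rewrite mul0r; apply: deg_le0.
- by rewrite big_nil; apply: deg_le0.
Qed.

Lemma sos_mono d d' f : (d <= d')%N -> sos d f -> sos d' f.
Proof.
move=> le_dd' [s1 [gs1 [-> dq1 dg1]]]; exists s1, gs1.
by split=> [//|i|]; apply: deg_le_mono le_dd' _; [apply: dq1|apply: dg1].
Qed.

Lemma sos_sqr_mul e d h f : deg_le e h -> sos d f -> sos (e * 2 + d) (h ^+ 2 * f).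
Proof.
move=> dh [s1 [gs1 [-> dq1 dg1]]].
have dh2 : deg_le (e * 2) (h ^+ 2) by apply: deg_leXn.
exists (fun i => h ^+ 2 * s1 i), (map (fun g => h * g) gs1); split.
- rewrite mulrDr mulr_sumr big_map mulr_sumr; congr (_ + _).
    by apply: eq_bigr => i _; rewrite mulrA.
  by apply: eq_bigr => g _; rewrite exprMn.
- by move=> i; rewrite -mulrA; apply/deg_leM/dq1.
- rewrite big_map (eq_bigr (fun g => h ^+ 2 * g ^+ 2)) => [|g _]; last first.
    by rewrite exprMn.
  by rewrite -mulr_sumr; apply/deg_leM/dg1.
Qed.

Lemma sos_le_trans d f g h : sos d (g - f) -> sos d (h - g) -> sos d (h - f).
Proof. by move=> sgf shg; rewrite -(subrK g h) -addrA; apply: sosD. Qed.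

Lemma sos_tangent_gap (a c : P) M : deg_le 1 a -> deg_le 1 c ->
  sos M.*2.+2 ((c - a) ^+ 2 * tangent_quot a c M).
Proof.
move=> da dc; rewrite mulrDr mulr_sumr; apply: sosD.
  rewrite mulrCA mulr_natl; apply: sosMn; rewrite -exprMn.
  apply: sos_sqr; apply: (deg_le_mono (d := (1 + 1 * M) * 2)); first lia.
  by apply/deg_leXn/deg_leM; [apply: deg_leB|apply: deg_leXn].
apply: sos_sum => -[t /= lt_tM] _.
rewrite mulrCA mulr_natl; apply: sosMn; rewrite -exprMn !mulrA.
apply: sos_sqr; apply: (deg_le_mono (d := (1 + 1 + 1 * t + 1 * (M.-1 - t)) * 2)).
  by lia.
apply/deg_leXn/deg_leM; last exact: deg_leXn.
apply: deg_leM; last exact: deg_leXn.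
by apply: deg_leM; [apply: deg_leB|apply: deg_leD].
Qed.

Lemma sos_jensen_even (I : finType) (w : I -> R) (U : I -> P) r :
  (forall b, 0 <= w b) -> \sum_b w b = 1 -> (forall b, deg_le 1 (U b)) ->
  sos r.*2 (\sum_b w b *: U b ^+ r.*2 - (\sum_b w b *: U b) ^+ r.*2).
Proof.
move=> w_ge0 w_sum1 dU; case: r => [|M]; rewrite ?doubleS.
  rewrite (eq_bigr (fun b => w b *: 1)) => [|b _]; last by rewrite expr0.
  by rewrite -scaler_suml w_sum1 scale1r expr0 subrr; apply: sos0.
(* The mean [a] and, below, the exponent are kept abstract: unification
   would otherwise unfold the powers of polynomials. *)
have [a a_def] : {a | \sum_b w b *: U b = a} by exists (\sum_b w b *: U b).
have da : deg_le 1 a by rewrite -a_def; apply: deg_le_sum => b _; apply: deg_leZ.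
have mean_gap : \sum_b w b *: (U b - a) = 0.
  by rewrite (eq_bigr _ (fun b _ => scalerBr _ _ _)) sumrB -scaler_suml w_sum1 scale1r a_def subrr.
rewrite a_def.
(* The tangent terms are linear in U b - a, so they average out. *)
have -> : \sum_b w b *: U b ^+ M.*2.+2 - a ^+ M.*2.+2 =
          \sum_b w b *: ((U b - a) ^+ 2 * tangent_quot a (U b) M).
  under [RHS]eq_bigr => b _ do
    rewrite -even_pow_tangent_gap !scalerBr (scalerAr (w b) _%:R) (scalerAr (w b) (a ^+ _)).
  rewrite !sumrB -!mulr_sumr mean_gap !mulr0 subr0.
  by move: M.*2.+2 => N; rewrite -scaler_suml w_sum1 scale1r.
by apply: sos_sum => b _; apply: sosZ => //; apply: sos_tangent_gap.
Qed.

Lemma sos_sub_pow c (g : P) l : 0 <= c -> deg_le 1 g -> sos 2 (c *: 1 - g ^+ 2) ->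
  sos l.*2 (c ^+ l *: 1 - g ^+ l.*2).
Proof.
move=> c_ge0 dg sg; elim: l => [|l IHl].
  by rewrite !expr0 scale1r subrr; apply: sos0.
have -> : c ^+ l.+1 *: 1 - g ^+ l.+1.*2 =
          c *: (c ^+ l *: 1 - g ^+ l.*2) + (g ^+ l) ^+ 2 * (c *: 1 - g ^+ 2).
  rewrite exprS -scalerA -exprM muln2 doubleS -addn2 exprD.
  by rewrite scalerBr mulrBr -scalerAr mulr1 addrA subrK.
apply: sosD.
  by apply: sosZ => //; apply: sos_mono IHl; rewrite leq_double.
apply: (sos_mono (d := l * 2 + 2)); first by rewrite doubleS -muln2 addn2.
by apply: sos_sqr_mul => //; apply: (deg_le_mono (d := 1 * l)); [rewrite mul1n|apply: deg_leXn].
Qed.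

End SosCertificates.

Lemma cube_sos_sub_diff_sqr (R : realType) (n : nat) (a b : 'I_n) :
  sos_proves 2 (@cube_axioms R n) (4 *: 1 - ('X_a - 'X_b) ^+ 2).
Proof.
have -> : 4 *: 1 - ('X_a - 'X_b) ^+ 2 =
          ('X_a + 'X_b) ^+ 2 + (- 2%:R * cube_axioms R a + - 2%:R * cube_axioms R b).
  by rewrite /cube_axioms scaler_nat; ring.
have daxiom i : deg_le 2 (- 2%:R * @cube_axioms R n i).
  apply: (deg_leM (a := 0)); first by apply/deg_leN/deg_leMn/deg_le1.
  by apply: deg_leB; [apply: (deg_leXn (a := 1))|]; rewrite ?deg_le1 ?deg_leX.
apply: sosD; last by apply: sosD; apply: sos_axiom_mul.
by apply/sos_sqr/(deg_leXn (a := 1))/deg_leD; apply: deg_leX.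
Qed.

Section MultinomialMoments.
Variables (R : realType) (n : nat) (p : 'I_n -> R).
Local Notation P := {mpoly R[n]}.
Local Notation sos d := (sos_proves d (@cube_axioms R n)).
Local Notation draw k := {ffun 'I_k -> 'I_n}.

Definition mean_form : P := \sum_b p b *: 'X_b.
Definition centred (a : 'I_n) : P := 'X_a - mean_form.
Definition draw_prob k (z : draw k) : R := \prod_(nu < k) p (z nu).
Definition draw_sum k (z : draw k) : P := \sum_(nu < k) centred (z nu).
Definition expect k (F : P -> P) : P := \sum_(z : draw k) draw_prob z *: F (draw_sum z).

Lemma freq_formE k (z : draw k) : k != 0%N ->
  \sum_j (freq R z j - p j) *: 'X_j = k%:R^-1 *: draw_sum z.
Proof.
move=> k_neq0.
have sum_freq : \sum_j freq R z j *: ('X_j : P) = k%:R^-1 *: \sum_nu 'X_(z nu).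
  rewrite (eq_bigr (fun nu => \sum_j if z nu == j then 'X_j else 0)) => [|nu _]; last first.
    by rewrite -big_mkcond (big_pred1 (z nu)) // => j; rewrite eq_sym.
  rewrite exchange_big scaler_sumr; apply: eq_bigr => j _.
  rewrite -big_mkcond /= sumr_const /freq -scaler_nat scalerA mulrC.
  by congr ((_ * _%:R) *: _); apply: eq_card => nu; rewrite inE.
rewrite (eq_bigr _ (fun j _ => scalerBl _ _ _)) sumrB sum_freq /draw_sum /centred.
by rewrite sumrB scalerBr sumr_const card_ord -scaler_nat scalerA mulVf ?pnatr_eq0 ?scale1r.
Qed.

Lemma mul_momentE k s : k != 0%N ->
  mul_moment k p s = k%:R^-1 ^+ s *: expect k (fun x => x ^+ s).
Proof.
move=> k_neq0; rewrite /mul_moment /expect scaler_sumr; apply: eq_bigr => z _.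
by rewrite freq_formE // exprZn !scalerA mulrC.
Qed.

Lemma expect0 F : expect 0 F = F 0.
Proof.
rewrite /expect (eq_bigr (fun=> F 0)) => [|z _].
  by rewrite sumr_const card_ffun !card_ord.
by rewrite /draw_prob /draw_sum !big_ord0 scale1r.
Qed.

Lemma expectS k F :
  expect k.+1 F = expect k (fun x => \sum_a p a *: F (centred a + x)).
Proof.
pose cons_draw (az : 'I_n * draw k) : draw k.+1 :=
  [ffun i => if unlift ord0 i is Some j then az.2 j else az.1].
pose uncons_draw (z : draw k.+1) := (z ord0, [ffun j => z (lift ord0 j)]).
have consK : cancel uncons_draw cons_draw.
  by move=> z; apply/ffunP => i; rewrite ffunE; case: unliftP => [j ->|->]; rewrite ?ffunE.
have unconsK : cancel cons_draw uncons_draw.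
  move=> [a z]; rewrite /uncons_draw ffunE unlift_none; congr pair.
  by apply/ffunP => j; rewrite !ffunE liftK.
rewrite /expect (reindex cons_draw); last by apply: onW_bij; exists uncons_draw.
under [RHS]eq_bigr do rewrite scaler_sumr.
rewrite exchange_big pair_bigA /=; apply: eq_bigr => -[a z] _ /=.
rewrite scalerA /draw_prob /draw_sum !big_ord_recl ffunE unlift_none.
under eq_bigr do rewrite ffunE liftK.
under [in X in F (_ + X)]eq_bigr do rewrite ffunE liftK.
by rewrite mulrC.
Qed.

Lemma expect_sumZ k (I : finType) (c : I -> R) (F : I -> P -> P) :
  expect k (fun x => \sum_i c i *: F i x) = \sum_i c i *: expect k (F i).
Proof.
rewrite /expect; under eq_bigr do rewrite scaler_sumr.
rewrite exchange_big; apply: eq_bigr => i _; rewrite scaler_sumr.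
by apply: eq_bigr => z _; rewrite !scalerA mulrC.
Qed.

Hypothesis p_ge0 : forall i, 0 <= p i.

Lemma deg_le_centred a : deg_le 1 (centred a).
Proof. by apply: deg_leB; [apply: deg_leX|apply: deg_le_sum => b _; apply/deg_leZ/deg_leX]. Qed.

Lemma sos_expect_le d k F G : (forall x, deg_le 1 x -> sos d (G x - F x)) ->
  sos d (expect k G - expect k F).
Proof.
move=> sGF; rewrite /expect -sumrB; apply: sos_sum => z _; rewrite -scalerBr.
apply: sosZ; first by apply: prodr_ge0.
by apply/sGF/deg_le_sum => nu _; apply: deg_le_centred.
Qed.

Definition diff_moment j : P := \sum_a \sum_b (p a * p b) *: ('X_a - 'X_b) ^+ j.

Lemma diff_moment_odd j : odd j -> diff_moment j = 0.
Proof.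
move=> j_odd.
have swap : diff_moment j = - diff_moment j.
  rewrite {1}/diff_moment exchange_big -sumrN; apply: eq_bigr => a _.
  rewrite -sumrN; apply: eq_bigr => b _.
  by rewrite mulrC -scalerN -opprB exprNn -signr_odd j_odd mulN1r.
have : (2 : R) *: diff_moment j == 0 by rewrite scaler_nat mulr2n {1}swap addNr.
by rewrite scaler_eq0 pnatr_eq0 => /eqP.
Qed.

Hypothesis p_sum1 : \sum_i p i = 1.

Lemma sos_diff_moment_even l : sos l.*2 (4 ^+ l *: 1 - diff_moment l.*2).
Proof.
have p2_sum1 : \sum_a \sum_b p a * p b = 1.
  by under eq_bigr do rewrite -mulr_sumr p_sum1 mulr1.
rewrite -[X in X - _]scale1r -{1}p2_sum1 scaler_suml /diff_moment -sumrB.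
apply: sos_sum => a _; rewrite scaler_suml -sumrB; apply: sos_sum => b _.
rewrite -scalerBr; apply: sosZ; first exact: mulr_ge0.
apply: sos_sub_pow; [exact: ler0n|apply: deg_leB; apply: deg_leX|].
exact: cube_sos_sub_diff_sqr.
Qed.

Lemma centred_avg_diff a x : \sum_b p b *: (x + ('X_a - 'X_b)) = centred a + x.
Proof.
under eq_bigr do rewrite !scalerDr scalerN.
rewrite !big_split /= -!scaler_suml p_sum1 !scale1r sumrN.
by rewrite /centred /mean_form addrC.
Qed.

Lemma diff_binomial (x : P) r :
  \sum_a p a *: \sum_b p b *: (x + ('X_a - 'X_b)) ^+ r.*2 =
  \sum_(l < r.+1) (x ^+ (r - l).*2 * diff_moment l.*2) *+ 'C(r.*2, l.*2).
Proof.
transitivity (\sum_(i < r.*2.+1) (x ^+ (r.*2 - i) * diff_moment i) *+ 'C(r.*2, i)).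
  under eq_bigr do rewrite scaler_sumr.
  under eq_bigr do under eq_bigr do rewrite scalerA exprDn scaler_sumr.
  rewrite /diff_moment; under eq_bigr do rewrite exchange_big /=.
  rewrite exchange_big /=; apply: eq_bigr => i _.
  rewrite mulr_sumr -sumrMnl; apply: eq_bigr => a _.
  rewrite mulr_sumr -sumrMnl; apply: eq_bigr => b _.
  by rewrite -scalerMnr scalerAr.
rewrite (sum_ord_even (g := fun i => (x ^+ (r.*2 - i) * diff_moment i) *+ 'C(r.*2, i))).
  by apply: eq_bigr => l _; rewrite -doubleB.
by move=> i i_odd; rewrite diff_moment_odd // mulr0 mul0rn.
Qed.

Lemma sos_add_centred_pow_le r (x : P) : deg_le 1 x ->
  sos r.*2 (\sum_(l < r.+1) ('C(r.*2, l.*2) * 4 ^ l)%:R *: x ^+ (r - l).*2 -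
            \sum_a p a *: (centred a + x) ^+ r.*2).
Proof.
move=> dx; apply: (sos_le_trans (g := \sum_a p a *: \sum_b p b *: (x + ('X_a - 'X_b)) ^+ r.*2)).
  rewrite -sumrB; apply: sos_sum => a _; rewrite -scalerBr -centred_avg_diff.
  apply: sosZ => //; apply: sos_jensen_even => // b.
  by apply: deg_leD => //; apply: deg_leB; apply: deg_leX.
rewrite diff_binomial -sumrB; apply: sos_sum => -[l /=]; rewrite ltnS => le_lr _.
have -> : ('C(r.*2, l.*2) * 4 ^ l)%:R *: x ^+ (r - l).*2 -
          (x ^+ (r - l).*2 * diff_moment l.*2) *+ 'C(r.*2, l.*2) =
          'C(r.*2, l.*2)%:R *: ((x ^+ (r - l)) ^+ 2 * (4 ^+ l *: 1 - diff_moment l.*2)).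
  rewrite natrM natrX -scalerA -exprM muln2 mulrBr -scalerAr mulr1 scalerBr.
  by rewrite !scaler_nat.
apply: sosZ; first exact: ler0n.
apply: (sos_mono (d := (r - l) * 2 + l.*2)); first lia.
apply: sos_sqr_mul; last exact: sos_diff_moment_even.
by rewrite -{1}[(r - l)%N]mul1n; apply: deg_leXn.
Qed.

Lemma sos_expect_pow_le m k r : (r <= m)%N ->
  sos r.*2 ((16 * m * k)%:R ^+ r *: 1 - expect k (fun x => x ^+ r.*2)).
Proof.
elim: k r => [|k IHk] r le_rm.
  rewrite expect0 muln0; case: r le_rm => [|r] _.
    by rewrite !expr0 scale1r subrr; apply: sos0.
  by rewrite !expr0n /= scale0r subrr; apply: sos0.
pose coef l := ('C(r.*2, l.*2) * 4 ^ l)%N.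
rewrite expectS.
apply: (sos_le_trans (g := expect k (fun x => \sum_(l < r.+1) (coef l)%:R *: x ^+ (r - l).*2))).
  by apply: sos_expect_le => x dx; apply: sos_add_centred_pow_le.
rewrite expect_sumZ.
apply: (sos_le_trans (g := \sum_(l < r.+1) ((coef l)%:R * (16 * m * k)%:R ^+ (r - l)) *: 1)).
  rewrite -sumrB; apply: sos_sum => -[l /=]; rewrite ltnS => le_lr _.
  rewrite -scalerA -scalerBr; apply: sosZ; first exact: ler0n.
  apply: (sos_mono _ (IHk _ _)); first by rewrite leq_double leq_subr.
  exact: leq_trans (leq_subr l r) le_rm.
rewrite -scaler_suml -scalerBl; apply: sos_const; rewrite subr_ge0 -natrX.
rewrite (eq_bigr (fun l : 'I_r.+1 => (coef l * (16 * m * k) ^ (r - l))%:R)) => [|l _]; last first.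
  by rewrite [RHS]natrM natrX.
by rewrite -natr_sum ler_nat; apply: sum_bin_even_le.
Qed.

End MultinomialMoments.

Unset Implicit Arguments.

Theorem lemma3p9 (R : realType) (n k : nat) (p : 'I_n -> R) :
  in_simplex p ->
  forall s : nat, ~~ odd s -> (2 <= s)%N -> (s <= k)%N ->
    @sos_proves R n n s (@cube_axioms R n)
      (((8 * s)%:R / k%:R) ^+ (s./2) *: 1 - @mul_moment R n k p s).
Proof.
move=> [p_ge0 p_sum1] s s_even s_ge2 le_sk.
have k_neq0 : k != 0%N by rewrite -lt0n (leq_trans _ le_sk) // (leq_trans _ s_ge2).
have s_double : s = s./2.*2 by rewrite -[LHS]odd_double_half (negbTE s_even).
set m := s./2 in s_double *.
have -> : ((8 * s)%:R / k%:R : R) = k%:R^-1 ^+ 2 * (16 * m * k)%:R.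
  by rewrite {1}s_double -muln2 !natrM; field; rewrite pnatr_eq0.
rewrite exprMn -exprM mul2n -s_double.
rewrite mul_momentE // -scalerA -scalerBr s_double.
apply: sosZ; first by rewrite exprn_ge0 // invr_ge0 ler0n.
exact: sos_expect_pow_le.
Qed.
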